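(* Let $X$ be any Banach space and let $Y$ be a Banach space whose unit ball has a strongly exposed point $y_0\in S_Y$. Let $E=X\oplus_1Y$. Then for every $\varepsilon>0$ there is a convex combination of slices of $B_E$ containing $0$ and of diameter at most $4\varepsilon$ (i.e., there are ccs of $B_E$ around $0$ of arbitrarily small diameter). In particular, $E$ contains no ccs Daugavet point and fails the strong diameter 2 property.
   Context: $X\oplus_1Y$ is $X\times Y$ with norm $\|(x,y)\|=\|x\|+\|y\|$. A point $y_0\in B_Y$ is strongly exposed if there is $y_0^*\in S_{Y^*}$ with $\operatorname{Re}y_0^*(y_0)=1$ such that $\|y_n-y_0\|\to0$ whenever $y_n\in B_Y$ and $\operatorname{Re}y_0^*(y_n)\to1$. A slice of $B_E$ is a non-empty set $\{u\in B_E:\operatorname{Re}f(u)>\|f\|-\delta\}$ with $f\in E^*$, $\delta>0$; a ccs of $B_E$ is $\sum_{i=1}^n\lambda_iS_i$ with $\lambda_i\in(0,1]$, $\sum\lambda_i=1$, $S_i$ slices. $u\in S_E$ is a ccs Daugavet point if $\sup_{v\in C}\|u-v\|=2$ for every ccs $C$ of $B_E$. The strong diameter 2 property means every ccs of the unit ball has diameter $2$. *)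

From HB Require Import structures.
From mathcomp Require Import all_boot all_order all_algebra.
From mathcomp Require Import all_classical all_reals all_analysis.
Set Implicit Arguments. Unset Strict Implicit. Unset Printing Implicit Defensive.
Import Order.TTheory GRing.Theory Num.Theory.
Import numFieldNormedType.Exports.
Local Open Scope classical_set_scope.
Local Open Scope ring_scope.

Section Generic.
Variables (R : realType) (V : lmodType R) (N : V -> R).

Definition ball1 : set V := [set u | N u <= 1].

(* bounded (= continuous) real linear functionals, i.e. elements of V^* *)
Definition bdd_functional (f : V -> R) : Prop :=
  (forall (a : R) (u v : V), f (a *: u + v) = a * f u + f v) /\
  exists M : R, forall u, `|f u| <= M * N u.

Definition fnorm (f : V -> R) : R := sup [set `|f u| | u in ball1].

Definition slice (f : V -> R) (d : R) : set V :=
  [set u | ball1 u /\ fnorm f - d < f u].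

Definition is_slice (S : set V) : Prop :=
  exists (f : V -> R) (d : R),
    [/\ bdd_functional f, 0 < d, S = slice f d & S !=set0].

Definition is_ccs (C : set V) : Prop :=
  exists (n : nat) (lam : 'I_n -> R) (S : 'I_n -> set V),
    [/\ (0 < n)%N, (forall i, 0 < lam i <= 1), \sum_(i < n) lam i = 1,
        (forall i, is_slice (S i)) &
        C = [set v | exists u : 'I_n -> V,
                (forall i, S i (u i)) /\ v = \sum_(i < n) lam i *: u i]].

Definition ccs_daugavet_point (u : V) : Prop :=
  N u = 1 /\ forall C, is_ccs C -> sup [set N (u - v) | v in C] = 2.

Definition diam (C : set V) : R :=
  sup [set r | exists v w, [/\ C v, C w & r = N (v - w)]].

Definition strong_diameter_two : Prop :=
  forall C, is_ccs C -> diam C = 2.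

Definition strongly_exposed (y0 : V) : Prop :=
  ball1 y0 /\
  exists f : V -> R,
    [/\ bdd_functional f, fnorm f = 1, f y0 = 1 &
        forall yn : nat -> V, (forall n, ball1 (yn n)) ->
          (fun n => f (yn n)) @ \oo --> (1 : R) ->
          (fun n => N (yn n - y0)) @ \oo --> (0 : R)].

End Generic.

(* the l1-norm on X (+)_1 Y, carried by the product type X * Y *)
Definition norm1 (R : realType) (X Y : normedModType R) (u : X * Y) : R :=
  `|u.1| + `|u.2|.

From HB Require Import structures.
From mathcomp Require Import all_boot all_order all_algebra.
From mathcomp Require Import all_classical all_reals all_analysis.
From mathcomp Require Import lra.
Import Order.TTheory GRing.Theory Num.Theory.
Import numFieldNormedType.Exports.
Local Open Scope classical_set_scope.
Local Open Scope ring_scope.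

(* Let f strongly expose y0 in B_Y, so that slices of B_Y given
   by f (resp. -f) of small enough width lie in an eps-ball around y0
   (resp. -y0).  Lift f and -f to E = X (+)_1 Y through the second
   projection; the lifted functionals have the same norm, and every element
   u of the corresponding slices of B_E satisfies |u.1| < eps and
   |u.2 -+ y0| < eps (the l1-norm forces u.1 to be small once u.2 is close
   to a unit vector).  The convex combination C = 1/2 S1 + 1/2 S2 of these
   two slices contains 1/2 (0,y0) + 1/2 (0,-y0) = 0 and has diameter at most
   4 eps.  Taking eps = 1/8 gives a ccs containing 0 of diameter <= 1/2,
   which is incompatible both with ccs Daugavet points and with the strong
   diameter 2 property. *)

Section Functionals.
Context {R : realType} {V : lmodType R} {N : V -> R}.
Hypothesis N_ge0 : forall u, 0 <= N u.

Lemma bdd_functional_le_fnorm {f : V -> R} : bdd_functional N f ->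
  forall u, N u <= 1 -> `|f u| <= fnorm N f.
Proof.
move=> [_ [M HM]] u Hu; apply: ub_le_sup; last by exists u.
exists `|M| => _ [v Hv <-].
apply: (le_trans (HM v)); apply: (le_trans (y := `|M| * N v)).
  by apply: ler_wpM2r => //; exact: ler_norm.
by rewrite -[X in _ <= X]mulr1; apply: ler_wpM2l.
Qed.

Lemma bdd_functionalN {f : V -> R} : bdd_functional N f ->
  forall u, f (- u) = - f u.
Proof.
move=> [L _] u.
have f0 : f 0 = 0 by have := L 1 0 0; rewrite scale1r addr0 mul1r; lra.
by have := L (-1) u 0; rewrite scaleN1r addr0 f0 addr0 mulN1r.
Qed.

Lemma bdd_functional_opp {f : V -> R} : bdd_functional N f ->
  bdd_functional N (fun u => - f u).
Proof.
move=> [L [M HM]]; split; first by move=> a u v; rewrite L opprD mulrN.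
by exists M => u; rewrite normrN.
Qed.

Lemma fnorm_opp (f : V -> R) : fnorm N (fun u => - f u) = fnorm N f.
Proof.
by rewrite /fnorm; congr sup; apply: eq_imagel => u _; rewrite normrN.
Qed.

Lemma strongly_exposed_slices {y0 : V} {f : V -> R} :
  bdd_functional N f -> fnorm N f = 1 ->
  (forall yn : nat -> V, (forall n, ball1 N (yn n)) ->
     (fun n => f (yn n)) @ \oo --> (1 : R) ->
     (fun n => N (yn n - y0)) @ \oo --> (0 : R)) ->
  forall e : R, 0 < e -> exists2 d : R, 0 < d &
    forall y, N y <= 1 -> 1 - d < f y -> N (y - y0) < e.
Proof.
move=> hf fn1 Hse e e0; apply: contrapT => Hn.
have bad n : exists y : V,
    [/\ N y <= 1, 1 - n.+1%:R^-1 < f y & e <= N (y - y0)].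
  apply: contrapT => Hne; apply: Hn; exists n.+1%:R^-1.
    by rewrite invr_gt0 ltr0n.
  move=> y h1 h2; rewrite ltNge; apply/negP => h3; apply: Hne; by exists y.
have [yn Hyn] := choice bad.
have ball_yn n : ball1 N (yn n) by have [] := Hyn n.
have f_yn : (fun n => f (yn n)) @ \oo --> (1 : R).
  apply/cvgrPdist_lt => eps eps0.
  apply: filterS (near_infty_natSinv_lt (PosNum eps0)) => n /= hn.
  have [h1 h2 _] := Hyn n.
  have := bdd_functional_le_fnorm hf _ h1; rewrite fn1 => /(le_trans (ler_norm _)).
  move=> h3; rewrite ger0_norm ?subr_ge0 //; apply: lt_trans hn.
  by rewrite ltrBlDr addrC -ltrBlDr.
have /cvgrPdist_lt /(_ e e0) /filter_ex [n /= Hn'] := Hse yn ball_yn f_yn.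
have [_ _ h3] := Hyn n.
by move: Hn'; rewrite sub0r normrN ger0_norm //; lra.
Qed.

Definition midpoints (S1 S2 : set V) : set V :=
  [set v | exists u1 u2, [/\ S1 u1, S2 u2 & v = 2^-1 *: (u1 + u2)]].

Lemma is_ccs_midpoints (S1 S2 : set V) :
  is_slice N S1 -> is_slice N S2 -> is_ccs N (midpoints S1 S2).
Proof.
move=> s1 s2; pose S (i : 'I_2) := if val i == 0%N then S1 else S2.
exists 2%N, (fun=> 2^-1), S; split => //.
- by move=> i; rewrite invr_gt0 ltr0n /= invf_le1 ?ler1n ?ltr0n.
- by rewrite !big_ord_recl big_ord0 addr0; lra.
- by move=> i; rewrite /S; case: ifP.
apply/seteqP; split => v.
  move=> [u1 [u2 [h1 h2 ->]]].
  exists (fun i : 'I_2 => if val i == 0%N then u1 else u2); split.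
    by move=> i; rewrite /S; case: ifP.
  by rewrite !big_ord_recl big_ord0 addr0 scalerDr.
move=> [u [hu ->]]; exists (u ord0), (u (lift ord0 ord0)); split.
- exact: (hu ord0).
- exact: (hu (lift ord0 ord0)).
by rewrite !big_ord_recl big_ord0 addr0 scalerDr.
Qed.

Hypothesis N_subB : forall u v, N (u - v) <= N u + N v.

Lemma no_ccs_daugavet_point {C : set V} :
  is_ccs N C -> C 0 -> (forall v w, C v -> C w -> N (v - w) <= 2^-1) ->
  ~ exists u, ccs_daugavet_point N u.
Proof.
move=> Cc C0 Cd [u [nu Hu]]; have := Hu C Cc.
suff : sup [set N (u - v) | v in C] <= 3 / 2 by lra.
apply: ge_sup; first by exists (N (u - 0)), 0.
move=> _ [v Cv <-]; have := Cd v 0 Cv C0; rewrite subr0.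
by have := N_subB u v; lra.
Qed.

Lemma not_strong_diameter_two {C : set V} :
  is_ccs N C -> C 0 -> (forall v w, C v -> C w -> N (v - w) <= 2^-1) ->
  ~ strong_diameter_two N.
Proof.
move=> Cc C0 Cd /(_ C Cc); rewrite /diam.
suff : sup [set r | exists v w, [/\ C v, C w & r = N (v - w)]] <= 2^-1 by lra.
apply: ge_sup; first by exists (N (0 - 0)), 0, 0.
by move=> _ [v [w [Cv Cw ->]]]; exact: Cd.
Qed.

End Functionals.

Lemma midpoints_close (R : realType) (V : normedModType R) (a b a' b' c : V)
    (e : R) :
  `|a - c| < e -> `|b + c| < e -> `|a' - c| < e -> `|b' + c| < e ->
  `|2^-1 *: (a + b) - 2^-1 *: (a' + b')| <= 2 * e.
Proof.
move=> ha hb ha' hb'.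
rewrite -scalerBr normrZ ger0_norm ?invr_ge0 ?ler0n //.
have split_c x y : x + y = (x - c) + (y + c) by rewrite addrACA addNr addr0.
rewrite (split_c a b) (split_c a' b').
have := ler_normB (a - c + (b + c)) (a' - c + (b' + c)).
have := ler_normD (a - c) (b + c); have := ler_normD (a' - c) (b' + c).
lra.
Qed.

Section L1Sum.
Context {R : realType} {X Y : normedModType R}.

Lemma norm1_ge0 (u : X * Y) : 0 <= norm1 u.
Proof. by rewrite /norm1 addr_ge0. Qed.

Lemma norm1B (u v : X * Y) : norm1 (u - v) <= norm1 u + norm1 v.
Proof.
rewrite /norm1 /=; have := ler_normB u.1 v.1; have := ler_normB u.2 v.2.
lra.
Qed.

Lemma bdd_functional_snd {g : Y -> R} :
  bdd_functional (fun y : Y => `|y|) g -> bdd_functional (@norm1 R X Y) (g \o snd).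
Proof.
move=> [L [M HM]]; split; first by move=> a u v; rewrite /= L.
exists `|M| => u; apply: (le_trans (HM u.2)).
apply: (le_trans (y := `|M| * `|u.2|)).
  by apply: ler_wpM2r => //; exact: ler_norm.
by apply: ler_wpM2l => //; rewrite /norm1 lerDr.
Qed.

Lemma fnorm_snd (g : Y -> R) :
  fnorm (@norm1 R X Y) (g \o snd) = fnorm (fun y : Y => `|y|) g.
Proof.
rewrite /fnorm; congr sup; apply/seteqP; split => r [u Hu <-].
  exists u.2 => //; move: Hu; rewrite /ball1 /norm1 /=.
  by have := normr_ge0 u.1; lra.
by exists ((0 : X), u) => //; move: Hu; rewrite /ball1 /norm1 /= normr0 add0r.
Qed.

Context {g : Y -> R} {z : Y} {d e : R}.
Hypotheses (gn1 : fnorm (fun y : Y => `|y|) g = 1) (nz : `|z| = 1).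

Lemma slice_snd_mem : 0 < d -> g z = 1 -> slice (@norm1 R X Y) (g \o snd) d (0, z).
Proof.
move=> d0 gz; split; first by rewrite /ball1 /norm1 /= normr0 add0r nz.
by rewrite fnorm_snd gn1 /= gz; lra.
Qed.

Lemma slice_snd_close :
  (forall y, `|y| <= 1 -> 1 - d < g y -> `|y - z| < e) ->
  forall u, slice (@norm1 R X Y) (g \o snd) d u -> `|u.1| < e /\ `|u.2 - z| < e.
Proof.
move=> Hd u [Hb Hs]; move: Hb Hs; rewrite /ball1 /norm1 fnorm_snd gn1 /= => Hb Hs.
have := normr_ge0 u.1 => h0.
have close : `|u.2 - z| < e by apply: Hd => //; lra.
have := ler_normB u.2 (u.2 - z); rewrite opprB addrC subrK nz.
by split => //; lra.
Qed.

End L1Sum.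

Lemma small_ccs_around0 {R : realType} (X : normedModType R) {Y : normedModType R}
    {y0 : Y} :
  `|y0| = 1 -> strongly_exposed (fun y : Y => `|y|) y0 ->
  forall eps : R, 0 < eps ->
    exists C : set (X * Y),
      [/\ is_ccs (@norm1 R X Y) C, C 0 &
          forall v w, C v -> C w -> norm1 (v - w) <= 4 * eps].
Proof.
move=> ny0 [_ [f [hf fn1 fy0 Hse]]] eps eps0.
have fN := bdd_functionalN hf.
have [d d0 near_y0] := strongly_exposed_slices (fun y => normr_ge0 y) hf fn1 Hse _ eps0.
have gn1 : fnorm (fun y : Y => `|y|) (fun y => - f y) = 1 by rewrite fnorm_opp.
have near_Ny0 y : `|y| <= 1 -> 1 - d < - f y -> `|y - - y0| < eps.
  by move=> h1 h2; rewrite -normrN opprD opprK; apply: near_y0; rewrite ?normrN ?fN.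
have nNy0 : `|- y0| = 1 by rewrite normrN.
pose S1 := slice (@norm1 R X Y) (f \o snd) d.
pose S2 := slice (@norm1 R X Y) ((fun y => - f y) \o snd) d.
have slice_S1 : is_slice (@norm1 R X Y) S1.
  exists (f \o snd), d; split => //; first exact: bdd_functional_snd.
  by exists (0, y0); exact: slice_snd_mem.
have slice_S2 : is_slice (@norm1 R X Y) S2.
  exists ((fun y => - f y) \o snd), d; split => //.
    exact/bdd_functional_snd/bdd_functional_opp.
  by exists (0, - y0); apply: slice_snd_mem; rewrite // fN opprK.
exists (midpoints S1 S2); split; first exact: is_ccs_midpoints.
  exists (0, y0), (0, - y0); split; [exact: slice_snd_mem | |].
    by apply: slice_snd_mem; rewrite // fN opprK.
  by rewrite (_ : (0, y0) + (0, - y0) = (0 + 0, y0 - y0)) // addr0 subrr scaler0.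
move=> _ _ [a [b [Sa Sb ->]]] [a' [b' [Sa' Sb' ->]]].
have [a1 a2] := slice_snd_close fn1 ny0 near_y0 _ Sa.
have [a1' a2'] := slice_snd_close fn1 ny0 near_y0 _ Sa'.
have [b1 b2] := slice_snd_close gn1 nNy0 near_Ny0 _ Sb.
have [b1' b2'] := slice_snd_close gn1 nNy0 near_Ny0 _ Sb'.
rewrite opprK in b2 b2'.
have := @midpoints_close R X a.1 b.1 a'.1 b'.1 0 eps; rewrite !subr0 !addr0.
move=> /(_ a1 b1 a1' b1') k1.
have := @midpoints_close R Y a.2 b.2 a'.2 b'.2 y0 eps a2 b2 a2' b2' => k2.
by rewrite /norm1 /=; lra.
Qed.

Theorem mainTheorem8 (R : realType) (X Y : completeNormedModType R) (y0 : Y) :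
  `|y0| = 1 -> strongly_exposed (fun y : Y => `|y|) y0 ->
  [/\ (forall eps : R, 0 < eps ->
         exists C : set (X * Y),
           [/\ is_ccs (@norm1 R X Y) C, C 0 &
               forall v w, C v -> C w -> norm1 (v - w) <= 4 * eps]),
      ~ (exists u : X * Y, ccs_daugavet_point (@norm1 R X Y) u) &
      ~ strong_diameter_two (@norm1 R X Y)].
Proof.
move=> ny0 se; have small := small_ccs_around0 X ny0 se.
have [C [Cc C0 Cd]] := small (8%:R^-1) ltac:(by rewrite invr_gt0 ltr0n).
have Cd' v w : C v -> C w -> norm1 (v - w) <= 2^-1.
  by move=> Cv Cw; have := Cd v w Cv Cw; lra.
split => //.
- exact: (no_ccs_daugavet_point (@norm1B R X Y) Cc C0 Cd').
- exact: (@not_strong_diameter_two _ _ (@norm1 R X Y) C Cc C0 Cd').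
Qed.
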